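(* Let $(M,g_M,J)$ be an almost Hermitian manifold, $(N,g_N)$ a Riemannian manifold, and $F:(M,g_M,J)\to(N,g_N)$ a v-semi-slant submersion with v-semi-slant angle $\theta\in[0,\frac{\pi}{2})$. Then $N$ is even-dimensional.
   Context: A Riemannian submersion $F:(M,g_M)\to(N,g_N)$ is a smooth submersion whose differential $F_*$ preserves the lengths of horizontal vectors, i.e. vectors in $(\ker F_* )^\perp$. $F$ is a v-semi-slant submersion if there is a distribution $\mathcal{D}_1\subset(\ker F_* )^\perp$ with $J(\mathcal{D}_1)=\mathcal{D}_1$ such that, letting $\mathcal{D}_2$ be the orthogonal complement of $\mathcal{D}_1$ in $(\ker F_* )^\perp$, the angle $\theta(X)$ between $JX$ and the space $(\mathcal{D}_2)_p$ is the same constant $\theta$ for all nonzero $X\in(\mathcal{D}_2)_p$ and all $p\in M$; $\theta$ is the v-semi-slant angle. *)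

From HB Require Import structures.
From mathcomp Require Import all_boot all_order all_algebra.
From mathcomp Require Import all_classical all_reals all_analysis.
Set Implicit Arguments. Unset Strict Implicit. Unset Printing Implicit Defensive.
Import Order.TTheory GRing.Theory Num.Theory.
Local Open Scope ring_scope.

Section VSemiSlant.
Variable R : realType.

Definition gform (k : nat) (G : 'M[R]_k) (u v : 'rV[R]_k) : R :=
  (u *m G *m v^T) 0 0.

Definition is_inner_product (k : nat) (G : 'M[R]_k) : Prop :=
  G^T = G /\ forall u : 'rV[R]_k, u != 0 -> 0 < gform G u u.

Definition glen (k : nat) (G : 'M[R]_k) (u : 'rV[R]_k) : R :=
  Num.sqrt (gform G u u).

Definition almost_hermitian_at (m : nat) (G J : 'M[R]_m) : Prop :=
  is_inner_product G /\ J *m J = - 1%:M /\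
  forall u v : 'rV[R]_m, gform G (u *m J) (v *m J) = gform G u v.

Definition vertical (m n : nat) (dF : 'M[R]_(m, n)) (u : 'rV[R]_m) : Prop :=
  u *m dF = 0.

Definition horizontal (m n : nat) (G : 'M[R]_m) (dF : 'M[R]_(m, n))
    (u : 'rV[R]_m) : Prop :=
  forall v, vertical dF v -> gform G u v = 0.

Definition angle_vec_subspace (m : nat) (G : 'M[R]_m) (w : 'rV[R]_m)
    (S : 'rV[R]_m -> Prop) (theta : R) : Prop :=
  0 <= theta <= pi / 2 /\
  exists P : 'rV[R]_m, S P /\ (forall Y, S Y -> gform G (w - P) Y = 0) /\
    glen G P = cos theta * glen G w.

Definition D2_of (m n : nat) (G : 'M[R]_m) (dF : 'M[R]_(m, n))
    (D1 : 'M[R]_m) (u : 'rV[R]_m) : Prop :=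
  horizontal G dF u /\ forall v, (v <= D1)%MS -> gform G u v = 0.

End VSemiSlant.

(* A Riemannian submersion F : M -> N, modelled pointwise: at each p : M,
   g_M(p) = GM p, J(p) = J p, F_*p = dF p (as an m x n matrix acting on row
   vectors), g_N(F p) = GN (F p). *)
Definition riemannian_submersion (R : realType) (M N : Type) (m n : nat)
    (GM : M -> 'M[R]_m) (GN : N -> 'M[R]_n) (F : M -> N)
    (dF : M -> 'M[R]_(m, n)) : Prop :=
  (forall q : N, is_inner_product (GN q)) /\
  forall p : M,
    \rank (dF p) = n /\
    forall u, horizontal (GM p) (dF p) u ->
      gform (GN (F p)) (u *m dF p) (u *m dF p) = gform (GM p) u u.

Definition v_semi_slant (R : realType) (M N : Type) (m n : nat)
    (GM : M -> 'M[R]_m) (J : M -> 'M[R]_m) (GN : N -> 'M[R]_n) (F : M -> N)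
    (dF : M -> 'M[R]_(m, n)) (theta : R) : Prop :=
  riemannian_submersion GM GN F dF /\
  exists D1 : M -> 'M[R]_m,
    forall p : M,
      (forall u, (u <= D1 p)%MS -> horizontal (GM p) (dF p) u) /\
      (D1 p *m J p == D1 p)%MS /\
      forall X, D2_of (GM p) (dF p) (D1 p) X -> X != 0 ->
        angle_vec_subspace (GM p) (X *m J p) (D2_of (GM p) (dF p) (D1 p)) theta.

(* The skew form (X, Y) |-> g(JX, Y) restricted to the n-dimensional
   horizontal space is represented by a skew-symmetric n x n matrix; when n
   is odd its determinant vanishes, so some nonzero horizontal X has JX
   orthogonal to the whole horizontal space.  Since D_1 is J-invariant, such
   an X lies in D_2, and JX is orthogonal to D_2; its projection on D_2 is
   then zero, which forces the slant angle to be pi/2. *)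
From HB Require Import structures.
From mathcomp Require Import all_boot all_order all_algebra.
From mathcomp Require Import all_classical all_reals all_analysis.
Set Implicit Arguments. Unset Strict Implicit. Unset Printing Implicit Defensive.
Import Order.TTheory GRing.Theory Num.Theory.
Local Open Scope ring_scope.

Lemma det_skew_odd (F : numFieldType) n (A : 'M[F]_n) :
  A^T = - A -> odd n -> \det A = 0.
Proof.
move=> skewA odd_n; apply/eqP.
have detN : \det A = - \det A.
  by rewrite -[LHS]det_tr skewA -scaleN1r detZ -signr_odd odd_n expr1 mulN1r.
have : \det A *+ 2 == 0 by rewrite mulr2n {1}detN addNr.
by rewrite mulrn_eq0.
Qed.

Section TangentSpace.
Variable R : realType.

Lemma gformBl k (G : 'M[R]_k) (u v w : 'rV[R]_k) :
  gform G (u - v) w = gform G u w - gform G v w.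
Proof. by rewrite /gform !mulmxBl mxE [X in _ + X]mxE. Qed.

Lemma gformNl k (G : 'M[R]_k) (u w : 'rV[R]_k) :
  gform G (- u) w = - gform G u w.
Proof. by rewrite /gform !mulNmx mxE. Qed.

Lemma gformC k (G : 'M[R]_k) (u v : 'rV[R]_k) :
  G^T = G -> gform G u v = gform G v u.
Proof.
move=> symG; rewrite /gform -[v *m G *m u^T]trmxK [RHS]mxE.
by rewrite !trmx_mul trmxK symG mulmxA.
Qed.

Lemma gform_delta k (i j : 'I_k) (A : 'M[R]_k) :
  gform A (delta_mx 0 i) (delta_mx 0 j) = A i j.
Proof. by rewrite /gform -rowE trmx_delta -colE !mxE. Qed.

Lemma inner_product_unitmx k (G : 'M[R]_k) :
  is_inner_product G -> G \in unitmx.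
Proof.
case=> _ Gpos; rewrite -row_free_unit; apply: inj_row_free => v vG0.
apply/eqP; apply: contraT => /Gpos.
by rewrite /gform vG0 mul0mx mxE ltxx.
Qed.

Lemma eqmx_tr_kermx_ker p q (A : 'M[R]_(p, q)) :
  (A^T == kermx (kermx A)^T)%MS.
Proof.
have sub : (A^T <= kermx (kermx A)^T)%MS.
  by apply/sub_kermxP; rewrite -trmx_mul mulmx_ker trmx0.
rewrite -(mxrank_leqif_eq sub) mxrank_ker mxrank_tr mxrank_ker.
by rewrite subKn ?rank_leq_row // mxrank_tr.
Qed.

Lemma horizontalP m n (G : 'M[R]_m) (dF : 'M[R]_(m, n)) (u : 'rV[R]_m) :
  G \in unitmx -> horizontal G dF u <-> (u <= dF^T *m invmx G)%MS.
Proof.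
move=> Gunit; split=> [horu | /submxP [c ->] v vertv]; last first.
  rewrite /gform -!mulmxA mulKmx // -trmx_mul vertv trmx0.
  by rewrite mulmx0 mxE.
have uG_ker : (u *m G <= kermx (kermx dF)^T)%MS.
  apply/sub_kermxP/matrixP => i j; rewrite ord1 !mxE.
  have vertj : vertical dF (row j (kermx dF)).
    by apply/sub_kermxP; rewrite row_sub.
  rewrite -[RHS](horu _ vertj) /gform mxE.
  by apply: eq_bigr => k _; rewrite !mxE.
have /submxP [z uGz] : (u *m G <= dF^T)%MS.
  by rewrite (eqmxP (eqmx_tr_kermx_ker dF)).
by rewrite -[u](mulmxK Gunit) uGz -mulmxA submxMl.
Qed.

Lemma angle_vec_orthogonal_subspace m (G : 'M[R]_m) (w : 'rV[R]_m)
    (S : 'rV[R]_m -> Prop) (theta : R) :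
  is_inner_product G -> w != 0 -> (forall Y, S Y -> gform G w Y = 0) ->
  angle_vec_subspace G w S theta -> theta = pi / 2.
Proof.
move=> [_ Gpos] w_neq0 w_orth.
move=> [/andP [theta_ge0 theta_le] [P [SP [P_orth P_len]]]].
have PP0 : gform G P P = 0.
  have := P_orth P SP; rewrite gformBl w_orth // sub0r => /eqP.
  by rewrite oppr_eq0 => /eqP.
have len_w_gt0 : 0 < glen G w by rewrite sqrtr_gt0 Gpos.
have cos0 : cos theta = 0.
  move: P_len; rewrite /glen PP0 sqrtr0 => /esym/eqP.
  by rewrite mulf_eq0 (gt_eqF len_w_gt0) orbF => /eqP.
move: theta_le; rewrite le_eqVlt => /orP [/eqP // | theta_lt]; exfalso.
have : 0 < cos theta.
  apply: cos_gt0_pihalf; rewrite theta_lt andbT.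
  by apply: lt_le_trans theta_ge0; rewrite oppr_lt0 divr_gt0 ?pi_gt0.
by rewrite cos0 ltxx.
Qed.

Section AlmostHermitian.
Variables (m : nat) (G J : 'M[R]_m).
Hypothesis hermGJ : almost_hermitian_at G J.

Lemma almost_hermitian_skew (u v : 'rV[R]_m) :
  gform G (u *m J) v = - gform G u (v *m J).
Proof.
have [_ [JJ Jisom]] := hermGJ.
by rewrite -Jisom -mulmxA JJ mulmxN mulmx1 gformNl.
Qed.

Lemma almost_hermitian_mulmx_eq0 (u : 'rV[R]_m) : (u *m J == 0) = (u == 0).
Proof.
have [_ [JJ _]] := hermGJ.
apply/eqP/eqP => [uJ0|->]; last by rewrite mul0mx.
by apply/eqP; rewrite -oppr_eq0 -[u]mulmx1 -mulmxN -JJ mulmxA uJ0 mul0mx.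
Qed.

Lemma skew_form_odd_degenerate n (B : 'M[R]_(n, m)) : odd n ->
  exists2 c : 'rV[R]_n, c != 0 &
    forall Y, (Y <= B)%MS -> gform G (c *m B *m J) Y = 0.
Proof.
move=> odd_n; have [[symG _] _] := hermGJ.
set A := B *m J *m G *m B^T.
have A_gform i j : A i j = gform G (delta_mx 0 i *m B *m J) (delta_mx 0 j *m B).
  by rewrite -gform_delta /gform !trmx_mul !mulmxA.
have skewA : A^T = - A.
  apply/matrixP => i j; rewrite mxE [RHS]mxE !A_gform gformC //.
  by rewrite almost_hermitian_skew opprK gformC.
have [c c_neq0 cA] : exists2 c : 'rV[R]_n, c != 0 & c *m A = 0.
  by apply/det0P; rewrite det_skew_odd.
exists c => // _ /submxP [d ->]; rewrite /gform.
have -> : c *m B *m J *m G *m (d *m B)^T = c *m A *m d^T.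
  by rewrite trmx_mul !mulmxA.
by rewrite cA mul0mx mxE.
Qed.

Lemma D2_of_J_orthogonal n (dF : 'M[R]_(m, n)) (D1 : 'M[R]_m) (X : 'rV[R]_m) :
  (forall u, (u <= D1)%MS -> horizontal G dF u) -> stablemx D1 J ->
  horizontal G dF X ->
  (forall Y, horizontal G dF Y -> gform G (X *m J) Y = 0) ->
  D2_of G dF D1 X.
Proof.
move=> D1_hor D1J horX XJ_orth; split=> // v vD1.
have [_ [_ Jisom]] := hermGJ.
rewrite -Jisom XJ_orth //; apply: D1_hor.
exact: submx_trans (submxMr J vD1) D1J.
Qed.

End AlmostHermitian.
End TangentSpace.

Theorem theorem3p10 (R : realType) (M N : Type) (m n : nat) (p0 : M)
    (GM : M -> 'M[R]_m) (J : M -> 'M[R]_m) (GN : N -> 'M[R]_n)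
    (F : M -> N) (dF : M -> 'M[R]_(m, n)) (theta : R) :
  (forall p : M, almost_hermitian_at (GM p) (J p)) ->
  0 <= theta < pi / 2 ->
  v_semi_slant GM J GN F dF theta ->
  ~~ odd n.
Proof.
move=> herm /andP [_ theta_lt] [[_ submersion] [D1 semi_slant]].
have [rk_dF _] := submersion p0.
have [D1_hor [/andP [D1J _] slant]] := semi_slant p0.
have [innerG _] := herm p0.
have Gunit := inner_product_unitmx innerG.
set B := (dF p0)^T *m invmx (GM p0).
have B_free : row_free B.
  rewrite /row_free mxrankMfree ?mxrank_tr ?rk_dF //.
  by rewrite row_free_unit unitmx_inv.
apply/negP => odd_n.
have [c c_neq0 XJ_orth] := skew_form_odd_degenerate (herm p0) B odd_n.
set X := c *m B in XJ_orth *.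
have X_neq0 : X != 0 by rewrite mulmx_free_eq0.
have XJ_neq0 : X *m J p0 != 0.
  by rewrite (almost_hermitian_mulmx_eq0 (herm p0)).
have horX : horizontal (GM p0) (dF p0) X.
  by apply/horizontalP; rewrite ?submxMl.
have XJ_hor_orth Y :
    horizontal (GM p0) (dF p0) Y -> gform (GM p0) (X *m J p0) Y = 0.
  by move/horizontalP => /(_ Gunit); apply: XJ_orth.
have D2X := D2_of_J_orthogonal (herm p0) D1_hor D1J horX XJ_hor_orth.
have XJ_D2_orth Y : D2_of (GM p0) (dF p0) (D1 p0) Y ->
    gform (GM p0) (X *m J p0) Y = 0.
  by case=> /XJ_hor_orth.
have theta_eq : theta = pi / 2.
  exact: angle_vec_orthogonal_subspace innerG XJ_neq0 XJ_D2_orth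
    (slant X D2X X_neq0).
by rewrite theta_eq ltxx in theta_lt.
Qed.
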